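(* Consider Setting B with the regular nodes running Algorithm 2 (any graph sequence, any adversarial behavior). Let $i\in(\mathcal V\setminus\mathcal S)\cap\mathcal R$ and $k\in\mathbb N_+$ with $\tau_i[k]\neq\omega$. Then, componentwise (slot by slot), $$\mathbf d_i[k+1]\le \mathbf d_i[k]+\mathbf 1_{2f+1},\qquad\text{and}\qquad \tau_i[k+1]\le\tau_i[k]+1,$$ where $\mathbf d_i[k]\in\mathbb N^{2f+1}$ is the vector of stored indices $d_{i,l}$, $l\in\mathcal M_i$, arranged by storage slot, at time $k$ after the append operations of step $k$ and before the increment at the end of step $k$ (so that (F) sets $\tau_i[k+1]=\max_p(\mathbf d_i[k])_p+1$).
   Context: Setting B. Scalar system $x[k+1]=ax[k]$, $a\in\mathbb R$, monitored by nodes $\mathcal V=\{1,\dots,N\}$ with measurements $y_i[k]=c_ix[k]$, $c_i\in\mathbb R$. Source set $\mathcal S=\{i\in\mathcal V:c_i\neq0\}$. Time-varying directed graphs $\mathcal G[k]=(\mathcal V,\mathcal E[k])$, $\mathcal N_i[k]=\{l\ne i:(l,i)\in\mathcal E[k]\}$; the union graph over an interval has the union of the edge sets. An unknown set $\mathcal A\subseteq\mathcal V$ of adversarial nodes with $|\mathcal A|\le f$ ($f$-total model; $\mathcal A$ may intersect $\mathcal S$); $\mathcal R=\mathcal V\setminus\mathcal A$ are regular. Adversaries are Byzantine: at each time they may send arbitrary, possibly different values (of both estimate and freshness index) to different out-neighbors, or send nothing, and may collude. At each time $k$, each node $l$ sends to its out-neighbors a pair (estimate, freshness index); regular $l$ sends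 its true $(\hat x_l[k],\tau_l[k])$. Algorithm 2 (executed by regular nodes). Regular source $i\in\mathcal S$: $\tau_i[k]=0$ for all $k$ and $\hat x_i[k+1]=a\hat x_i[k]+l_i(y_i[k]-c_i\hat x_i[k])$ with observer gain $l_i$. Regular non-source $i$: keeps $\hat x_i[k]$ (arbitrary initial), $\tau_i[k]\in\mathbb N\cup\{\omega\}$ with $\tau_i[0]=\omega$, and a list $\mathcal M_i$ of distinct node labels (initially empty, at most $2f+1$ entries, stored in $2f+1$ slots) with, for each $l\in\mathcal M_i$, a stored estimate $v_{i,l}$, stored index $d_{i,l}\in\mathbb N$ and time stamp $\phi_{i,l}$. At time $k$ let $\mathcal J_i[k]$ be the set of $l\in\mathcal N_i[k]$ whose reported index $\tau_l[k]$ lies in $\mathbb N$ and satisfies $\tau_l[k]\le k$. ''Appending $l$ at time $k$'' means: put $l$ in $\mathcal M_i$ (if absent), set $v_{i,l}=\hat x_l[k]$, $d_{i,l}=\tau_l[k]$ (reported values), $\phi_{i,l}=k$. Filtering update (F) at time $k$ (requires $|\mathcal M_i|=2f+1$): set $\tau_i[k+1]=\max_{l\in\mathcal M_i}d_{i,l}+1$; form $\bar x_{i,l}[k]=a^{k-\phi_{i,l}}v_{i,l}$ for $l\in\mathcal M_i$; discard the $f$ largest and $f$ smallest of these $2f+1$ values, call the remaining one $\bar x_i[k]$, and set $\hat x_i[k+1]=a\bar x_i[k]$. Case $\tau_i[k]=\omega$: let $\mathcal J'=\mathcal J_i[k]\setminus\mathcal M_i$. If $|\mathcal M_i|+|\mathcal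 J'|<2f+1$, append every $l\in\mathcal J'$, set $\tau_i[k+1]=\omega$ and $\hat x_i[k+1]=a\hat x_i[k]$. Otherwise append the $2f+1-|\mathcal M_i|$ nodes of $\mathcal J'$ with smallest reported indices (ties broken arbitrarily) and perform (F). Case $\tau_i[k]\ne\omega$: for each $l\in\mathcal J_i[k]\cap\mathcal M_i$ with reported $\tau_l[k]<d_{i,l}$, append $l$ (refreshing its entries); then rank the nodes of $\mathcal M_i\cup(\mathcal J_i[k]\setminus\mathcal M_i)$ by index ($d_{i,l}$ for $l\in\mathcal M_i$, reported $\tau_l[k]$ otherwise), keep the $2f+1$ with smallest index (ties arbitrary), appending newcomers and deleting dropped nodes (a retained node keeps its storage slot; a newcomer occupies the slot of a dropped node), and perform (F). In all cases, after the step every stored $d_{i,l}$ is incremented by $1$, and $\mathcal M_i$, $v$, $\phi$ carry over to time $k+1$. *)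

From HB Require Import structures.
From mathcomp Require Import all_boot all_order all_algebra.
Set Implicit Arguments. Unset Strict Implicit. Unset Printing Implicit Defensive.
Import Order.TTheory GRing.Theory Num.Theory.
Local Open Scope ring_scope.

(* A stored record in a storage slot: label l, estimate v_{i,l},
   index d_{i,l}, time stamp phi_{i,l}. *)
Record entry (N : nat) (R : Type) := Entry {
  lab : 'I_N; val : R; idx : nat; stamp : nat }.

(* The 2f+1 storage slots of a non-source node; None = empty slot. *)
Definition slots (N m : nat) (R : Type) := 'I_m -> option (entry N R).

Section Alg.
Variables (R : realFieldType) (N f : nat).
Local Notation m := (2 * f).+1.
Local Notation slotsT := (slots N m R).

Definition slot_has (s : slotsT) (p : 'I_m) (l : 'I_N) : bool :=
  if s p is Some e then lab e == l else false.

Definition Mset (s : slotsT) : {set 'I_N} := [set l | [exists p, slot_has s p l]].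

Definition distinct_labels (s : slotsT) : Prop :=
  forall p q e e', s p = Some e -> s q = Some e' -> lab e = lab e' -> p = q.

Definition full (s : slotsT) : Prop := forall p, s p <> None.

Definition slot_idx (s : slotsT) (p : 'I_m) : nat :=
  if s p is Some e then idx e else 0%N.

Definition incr (s : slotsT) : slotsT :=
  fun p => if s p is Some e then Some (Entry (lab e) (val e) (idx e).+1 (stamp e))
           else None.

Definition filter_update (a : R) (k : nat) (s : slotsT)
    (tau' : option nat) (xh' : R) : Prop :=
  full s /\
  tau' = Some ((\max_(p < m) slot_idx s p) + 1)%N /\
  let vals := [seq (if s p is Some e then a ^+ (k - stamp e) * val e else 0)
              | p <- enum 'I_m] in
  xh' = a * nth 0 (sort <=%R vals) f.

(* Appending the nodes of [S] (none of which is in M_i) into empty slots,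
   all other slots unchanged.  [fresh l] is the entry built from reported values. *)
Definition append_into_empty (fresh : 'I_N -> entry N R) (S : {set 'I_N})
    (s mid : slotsT) : Prop :=
  (forall p e, s p = Some e -> mid p = Some e) /\
  (forall p e, mid p = Some e ->
      s p = Some e \/ (s p = None /\ lab e \in S /\ e = fresh (lab e))) /\
  (forall l, l \in S -> exists p, mid p = Some (fresh l)) /\
  distinct_labels mid.

Definition refresh (Jset : {set 'I_N}) (rt : 'I_N -> nat)
    (fresh : 'I_N -> entry N R) (s : slotsT) : slotsT :=
  fun p => if s p is Some e then
             if (lab e \in Jset) && (rt (lab e) < idx e)%N then Some (fresh (lab e))
             else Some e
           else None.

Definition rank_idx (s : slotsT) (rt : 'I_N -> nat) (l : 'I_N) : nat :=
  if [pick p | slot_has s p l] is Some p then slot_idx s p else rt l.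

(* Outputs: [mid] = slots after the
   append/delete operations of step k (before the increment), and the
   next tau, xhat. *)
Definition nonsource_step (a : R) (k : nat) (Jset : {set 'I_N})
    (rv : 'I_N -> R) (rt : 'I_N -> nat)
    (tau : option nat) (xh : R) (s : slotsT)
    (mid : slotsT) (tau' : option nat) (xh' : R) : Prop :=
  let fresh l := Entry l (rv l) (rt l) k in
  let J' := Jset :\: Mset s in
  match tau with
  | None =>
    if (#|Mset s| + #|J'| < m)%N then
      append_into_empty fresh J' s mid /\ tau' = None /\ xh' = a * xh
    else
      exists S : {set 'I_N},
        [/\ S \subset J', #|S| = (m - #|Mset s|)%N,
            (forall l l', l \in S -> l' \in J' :\: S -> (rt l <= rt l')%N),
            append_into_empty fresh S s mid &
            filter_update a k mid tau' xh']
  | Some _ =>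
    let s' := refresh Jset rt fresh s in
    let Cand := Mset s :|: J' in
    exists K : {set 'I_N},
      K \subset Cand /\ #|K| = m /\
      (forall l l', l \in K -> l' \in Cand :\: K ->
          (rank_idx s' rt l <= rank_idx s' rt l')%N) /\
      (forall p e, s' p = Some e -> lab e \in K -> mid p = Some e) /\
      (forall p e, mid p = Some e ->
          (s' p = Some e /\ lab e \in K) \/
          (lab e \in K :\: Mset s /\ e = fresh (lab e))) /\
      (forall l, l \in K :\: Mset s -> exists p, mid p = Some (fresh l)) /\
      distinct_labels mid /\
      filter_update a k mid tau' xh'
  end.

End Alg.

(* Messages: what node l sends to node i at time k:
   None = nothing sent; Some (estimate, index) with index None = omega. *)
Definition msg_t (R : Type) := option (R * option nat)%type.

Definition reported_idx (R : Type) (ms : msg_t R) : nat :=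
  if ms is Some (_, Some t) then t else 0%N.
Definition reported_est (R : ringType) (ms : msg_t R) : R :=
  if ms is Some (v, _) then v else 0.

Definition Jset (R : Type) (N : nat) (E : nat -> rel 'I_N)
    (msg : nat -> 'I_N -> 'I_N -> msg_t R) (k : nat) (i : 'I_N) : {set 'I_N} :=
  [set l | [&& l != i, E k l i &
             (if msg k l i is Some (_, Some t) then (t <= k)%N else false)]].

(* An execution of Setting B with the regular nodes running Algorithm 2.
   x: true state; msg: messages; tau, xh: freshness indices and estimates
   of the nodes; sl k i: slots of node i at (the start of) time k;
   mid k i: slots of node i at time k after the append operations of step k
   and before the increment. Adversarial nodes (in A) are unconstrained. *)
Definition execution (R : realFieldType) (N f : nat) (A : {set 'I_N})
    (a : R) (c gain : 'I_N -> R) (E : nat -> rel 'I_N)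
    (x : nat -> R) (msg : nat -> 'I_N -> 'I_N -> msg_t R)
    (tau : nat -> 'I_N -> option nat) (xh : nat -> 'I_N -> R)
    (sl mid : nat -> 'I_N -> slots N (2 * f).+1 R) : Prop :=
  [/\ (#|A| <= f)%N,
      (forall k, x k.+1 = a * x k),
      (forall k l i, l \notin A -> msg k l i = Some (xh k l, tau k l)),
      (forall i, i \notin A -> c i != 0 ->
         forall k, tau k i = Some 0%N /\
                   xh k.+1 i = a * xh k i + gain i * (c i * x k - c i * xh k i)) &
      (forall i, i \notin A -> c i = 0 ->
         [/\ tau 0%N i = None, (forall p, sl 0%N i p = None) &
             forall k,
               nonsource_step a k (Jset E msg k i)
                 (fun l => reported_est (msg k l i)) (fun l => reported_idx (msg k l i))
                 (tau k i) (xh k i) (sl k i) (mid k i) (tau k.+1 i) (xh k.+1 i) /\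
               sl k.+1 i = incr (mid k i)])].

From HB Require Import structures.
From mathcomp Require Import all_boot all_order all_algebra.
Set Implicit Arguments. Unset Strict Implicit. Unset Printing Implicit Defensive.

(* If tau_i[k] <> omega then step k-1 ran the filtering update, so at step k
   the 2f+1 slots are full and carry distinct labels.  During step k a slot
   either keeps its (possibly refreshed) entry, whose index is at most the
   previous one plus 1, or receives a newcomer; the latter only happens when
   the old occupant was dropped from the 2f+1 smallest indices, so the
   newcomer's reported index is at most the dropped one, which is again at
   most the previous one plus 1.  The bound on tau follows by taking maxima,
   since (F) sets tau to the largest stored index plus 1. *)

Section Slots.
Variables (R : realFieldType) (N f : nat).
Local Notation m := (2 * f).+1.
Local Notation slotsT := (slots N m R).

Definition same_labels (s s' : slotsT) : Prop :=
  forall p, omap (@lab N R) (s p) = omap (@lab N R) (s' p).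

Definition slots_idx_le_succ (s s' : slotsT) : Prop :=
  forall p, exists e e' : entry N R,
    [/\ s p = Some e, s' p = Some e' & (idx e' <= idx e + 1)%N].

Lemma slot_hasE (s : slotsT) p l : slot_has s p l = (omap (@lab N R) (s p) == Some l).
Proof. by rewrite /slot_has; case: (s p). Qed.

Lemma Mset_same_labels (s s' : slotsT) : same_labels s s' -> Mset s = Mset s'.
Proof.
by move=> eqs; apply/setP => l; rewrite !inE; apply: eq_existsb => p; rewrite !slot_hasE eqs.
Qed.

Lemma distinct_labels_same (s s' : slotsT) :
  same_labels s s' -> distinct_labels s -> distinct_labels s'.
Proof.
move=> eqs ds p q e e' s'p s'q le; move: (eqs p) (eqs q); rewrite s'p s'q.
case sp: (s p) => [ep|] //; case sq: (s q) => [eq|] //= [lp] [lq].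
by apply: ds sp sq _; rewrite lp lq.
Qed.

Lemma same_labels_incr (s : slotsT) : same_labels (incr s) s.
Proof. by move=> p; rewrite /incr; case: (s p). Qed.

Section Refresh.
Variables (J : {set 'I_N}) (rt : 'I_N -> nat) (fresh : 'I_N -> entry N R).
Hypotheses (fresh_lab : forall l, lab (fresh l) = l) (fresh_idx : forall l, idx (fresh l) = rt l).

Lemma same_labels_refresh (s : slotsT) : same_labels (refresh J rt fresh s) s.
Proof.
by move=> p; rewrite /refresh; case: (s p) => [e|] //=; case: ifP; rewrite //= fresh_lab.
Qed.

Lemma refresh_incr_idx (s : slotsT) p e : s p = Some e ->
  exists2 e', refresh J rt fresh (incr s) p = Some e' & (idx e' <= idx e + 1)%N.
Proof.
move=> sp; rewrite /refresh /incr sp /= addn1.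
by case: ifP => [/andP[_ lt]|_]; eexists; rewrite //= fresh_idx ltnW.
Qed.

End Refresh.

Lemma rank_idx_slot (s : slotsT) rt p e :
  distinct_labels s -> s p = Some e -> rank_idx s rt (lab e) = idx e.
Proof.
move=> ds sp; rewrite /rank_idx; case: pickP => [q|/(_ p)]; last by rewrite /slot_has sp eqxx.
rewrite /slot_has /slot_idx; case sq: (s q) => [e'|] // /eqP le.
have qp := ds _ _ _ _ sq sp le.
by move: sq; rewrite qp sp => -[->].
Qed.

Lemma rank_idx_notin (s : slotsT) rt l : l \notin Mset s -> rank_idx s rt l = rt l.
Proof.
move=> lM; rewrite /rank_idx; case: pickP => // q sq.
by case/negP: lM; rewrite inE; apply/existsP; exists q.
Qed.

Lemma nonsource_step_Some (a : R) k J rv rt tau xh (s mid : slotsT) t' xh' :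
  nonsource_step a k J rv rt tau xh s mid (Some t') xh' ->
  [/\ full mid, distinct_labels mid & t' = ((\max_(p < m) slot_idx mid p) + 1)%N].
Proof.
case: tau => [t|] /=.
  by move=> [K [_ [_ [_ [_ [_ [_ [dist [full [[->] _]]]]]]]]]].
case: ifP => _; first by move=> [_ []].
by move=> [S [_ _ _ [_ [_ [_ dist]]] [full [[->] _]]]].
Qed.

Lemma nonsource_step_tau_Some (a : R) k J rv rt t xh (s mid : slotsT) tau' xh' :
  nonsource_step a k J rv rt (Some t) xh s mid tau' xh' -> exists t', tau' = Some t'.
Proof. by move=> [K [_ [_ [_ [_ [_ [_ [_ [_ [-> _]]]]]]]]]]; eexists. Qed.

Lemma nonsource_step_idx_le_succ (a : R) k J rv rt t xh (prev mid : slotsT) tau' xh' :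
  full prev -> distinct_labels prev ->
  nonsource_step a k J rv rt (Some t) xh (incr prev) mid tau' xh' ->
  slots_idx_le_succ prev mid.
Proof.
move=> fullP distP [K [_ [_ [rankK [keep [midE [_ [_ [fullM _]]]]]]]]] p.
set fresh := fun l => Entry l (rv l) (rt l) k.
set s' := refresh J rt fresh (incr prev) in rankK keep midE.
have labs' : same_labels s' prev.
  move=> q; rewrite (same_labels_refresh J rt (fresh := fresh) (fun l => erefl) _ q).
  exact: same_labels_incr.
have MsE : Mset (incr prev) = Mset s'.
  by rewrite (Mset_same_labels (same_labels_incr prev)) (Mset_same_labels labs').
have dist' : distinct_labels s' by apply: distinct_labels_same distP => q; rewrite labs'.
case prevp: (prev p) => [e|]; last by case: (fullP p).
have [e2 s'p le2] := refresh_incr_idx J (rt := rt) (fresh := fresh) (fun l => erefl) prevp.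
fold s' in s'p.
case midp: (mid p) => [e'|]; last by case: (fullM p).
exists e, e'; split=> //.
have lab2 : lab e2 = lab e by move: (labs' p); rewrite s'p prevp => -[].
have inM : lab e \in Mset s' by rewrite inE; apply/existsP; exists p; rewrite /slot_has s'p lab2.
case: (midE _ _ midp) => [[s'pE _] | [newK e'E]]; first by move: s'pE; rewrite s'p => -[<-].
move: newK; rewrite MsE inE => /andP [notM inK].
have notK : lab e \notin K.
  apply/negP => inK'; have := keep _ _ s'p; rewrite lab2 midp => /(_ inK') [e'e2].
  by move: notM; rewrite e'e2 lab2 inM.
(* the newcomer was ranked no worse than the dropped occupant of slot p *)
have inCand : lab e \in (Mset (incr prev) :|: J :\: Mset (incr prev)) :\: K.
  by rewrite in_setD notK in_setU MsE inM.
have := rankK _ _ inK inCand.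
rewrite (rank_idx_notin rt notM) -lab2 (rank_idx_slot rt dist' s'p).
have -> : idx e' = rt (lab e') by rewrite e'E.
by move=> le_rank; apply: leq_trans le_rank le2.
Qed.

Lemma bigmax_slot_idx_le_succ (s s' : slotsT) : slots_idx_le_succ s s' ->
  (\max_(p < m) slot_idx s' p <= (\max_(p < m) slot_idx s p) + 1)%N.
Proof.
move=> le_s; apply/bigmax_leqP => p _; have [e [e' [sp s'p le]]] := le_s p.
rewrite /slot_idx s'p; apply: leq_trans le _; rewrite leq_add2r.
by have := @leq_bigmax _ (slot_idx s) p; rewrite /slot_idx sp.
Qed.

End Slots.

Section Execution.
Variables (R : realFieldType) (N f : nat) (A : {set 'I_N})
  (a : R) (c gain : 'I_N -> R) (E : nat -> rel 'I_N)
  (x : nat -> R) (msg : nat -> 'I_N -> 'I_N -> msg_t R)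
  (tau : nat -> 'I_N -> option nat) (xh : nat -> 'I_N -> R)
  (sl mid : nat -> 'I_N -> slots N (2 * f).+1 R).
Hypothesis exec : execution A a c gain E x msg tau xh sl mid.
Variable i : 'I_N.
Hypotheses (iA : i \notin A) (ci : c i = 0%R).

Lemma execution_step k :
  nonsource_step a k (Jset E msg k i)
    (fun l => reported_est (msg k l i)) (fun l => reported_idx (msg k l i))
    (tau k i) (xh k i) (sl k i) (mid k i) (tau k.+1 i) (xh k.+1 i) /\
  sl k.+1 i = incr (mid k i).
Proof. by case: exec => _ _ _ _ /(_ i iA ci) [_ _]. Qed.

Lemma execution_filtered k t : tau k.+1 i = Some t ->
  [/\ full (mid k i), distinct_labels (mid k i)
    & t = ((\max_(p < (2 * f).+1) slot_idx (mid k i) p) + 1)%N].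
Proof.
move=> tauS; have [st _] := execution_step k; rewrite tauS in st.
exact: nonsource_step_Some st.
Qed.

Lemma execution_tau_succ k t : tau k i = Some t -> exists t', tau k.+1 i = Some t'.
Proof.
move=> tauS; have [st _] := execution_step k; rewrite tauS in st.
exact: nonsource_step_tau_Some st.
Qed.

Lemma execution_idx_le_succ k t : tau k.+1 i = Some t ->
  slots_idx_le_succ (mid k i) (mid k.+1 i).
Proof.
move=> tauS; have [fullM distM _] := execution_filtered tauS.
have [st _] := execution_step k.+1; rewrite tauS (execution_step k).2 in st.
exact: nonsource_step_idx_le_succ fullM distM st.
Qed.

End Execution.

Theorem lemma5 (R : realFieldType) (N f : nat) (A : {set 'I_N})
    (a : R) (c gain : 'I_N -> R) (E : nat -> rel 'I_N)
    (x : nat -> R) (msg : nat -> 'I_N -> 'I_N -> msg_t R)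
    (tau : nat -> 'I_N -> option nat) (xh : nat -> 'I_N -> R)
    (sl mid : nat -> 'I_N -> slots N (2 * f).+1 R) :
  execution A a c gain E x msg tau xh sl mid ->
  forall (i : 'I_N) (k : nat), i \notin A -> c i = 0%R -> (0 < k)%N ->
  tau k i <> None ->
  (forall p : 'I_(2 * f).+1, exists e e' : entry N R,
      [/\ mid k i p = Some e, mid k.+1 i p = Some e' & (idx e' <= idx e + 1)%N]) /\
  (exists t t' : nat, [/\ tau k i = Some t, tau k.+1 i = Some t' & (t' <= t + 1)%N]).
Proof.
move=> exec i [//|k] iA ci _; case tauk: (tau k.+1 i) => [t|] // _.
have [t' tauk'] := execution_tau_succ exec iA ci tauk.
split; first exact (execution_idx_le_succ exec iA ci tauk').
exists t, t'; split => //.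
have [_ _ ->] := execution_filtered exec iA ci tauk.
have [_ _ ->] := execution_filtered exec iA ci tauk'.
by rewrite leq_add2r; apply: bigmax_slot_idx_le_succ (execution_idx_le_succ exec iA ci tauk).
Qed.
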